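(* Assume the Setup below. For $n\ge1$ let $\Psi(n)=\Psi_{\theta_0}(n)$, $\dot\Psi(n)=\frac{d}{d\theta}\Psi_\theta(n)|_{\theta_0}$ and $$M^{(n)}=|\Psi(n)\rangle\langle\dot\Psi(n)|-|\dot\Psi(n)\rangle\langle\Psi(n)|$$ on $\mathcal H_0\otimes\mathcal H_1\otimes\cdots\otimes\mathcal H_n$. Let $1\le j\le n$ and let $e^{[1]},\dots,e^{[j-1]}\in\mathbb C^k$ be unit vectors with $|\langle e^{[l]}|\chi\rangle|^2=1/k$ for all $l$. Define $$M^{(n)}(\underline{j-1})=\big\langle e^{[1]}\otimes\cdots\otimes e^{[j-1]}\big|M^{(n)}\big|e^{[1]}\otimes\cdots\otimes e^{[j-1]}\big\rangle$$ (partial matrix element over $\mathcal H_1,\dots,\mathcal H_{j-1}$, an operator on $\mathcal H_0\otimes\mathcal H_j\otimes\cdots\otimes\mathcal H_n$) and $M^{(n)}_j(\underline{j-1})=\mathrm{Tr}_{0,j+1,\dots,n}M^{(n)}(\underline{j-1})$, an operator on $\mathcal H_j\cong\mathbb C^k$. Then $$M^{(n)}_j(\underline{j-1})=M^{(j)}_j(\underline{j-1}).$$ Consequently, in the sequential adaptive procedure in which the basis $\{e^{[j]}_i\}_{i=1}^k$ of unit $j$ is chosen (given the previously chosen bases and outcomes $i_1,\dots,i_{j-1}$, with $e^{[l]}=e^{[l]}_{i_l}$) to satisfy $\langle e^{[j]}_i|M^{(n)}_j(\underline{j-1})|e^{[j]}_i\rangle=0$ and $|\langle e^{[j]}_i|\chi\rangle|^2=1/k$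 for all $i$, the constraints determining the bases of units $1,\dots,j$ are the same for every output length $n\ge j$, so these bases can be chosen independently of $n$.
   Context: Setup: Let $D,k\ge2$ be integers, $\mathcal H_0=\mathbb C^D$ (the system, e.g. system plus absorber) and $\mathcal H_1,\dots,\mathcal H_n$ copies of $\mathbb C^k$ (noise units). Let $\chi\in\mathbb C^k$ be a unit vector and $P_\chi=|\chi\rangle\langle\chi|$. Let $\theta\mapsto W_\theta$ be a smooth family of unitaries on $\mathbb C^D\otimes\mathbb C^k$, and let $W^{(j)}_\theta$ denote $W_\theta$ acting on $\mathcal H_0\otimes\mathcal H_j$ (identity on the other factors). Fix $\theta_0$ and write $W=W_{\theta_0}$, $\dot W=\frac{dW_\theta}{d\theta}|_{\theta_0}$. Assume there is a unit vector $\psi\in\mathbb C^D$ with $W(\psi\otimes\chi)=\psi\otimes\chi$ and $\langle\psi\otimes\chi|\dot W|\psi\otimes\chi\rangle=0$. Define $\Psi_\theta(n)=W^{(n)}_\theta\cdots W^{(1)}_\theta(\psi\otimes\chi^{\otimes n})\in\mathcal H_0\otimes\mathcal H_1\otimes\cdots\otimes\mathcal H_n$. $\mathrm{Tr}_{0,j+1,\dots,n}$ denotes partial trace over $\mathcal H_0,\mathcal H_{j+1},\dots,\mathcal H_n$. *)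

From mathcomp Require Import all_boot all_order all_algebra.
From mathcomp Require Import all_classical all_reals all_analysis.
From mathcomp Require Import complex.

Set Implicit Arguments.
Unset Strict Implicit.
Unset Printing Implicit Defensive.
Import Order.TTheory GRing.Theory Num.Theory.
Local Open Scope ring_scope.

Section QDefs.
Variable R : realType.
Local Notation C := R[i].

Definition smooth (f : R -> R) : Prop :=
  forall (m : nat) (t : R), derivable (derive1n m f) t 1.

Definition csmooth (g : R -> C) : Prop :=
  smooth (fun t => complex.Re (g t)) /\ smooth (fun t => complex.Im (g t)).

Definition cderiv (g : R -> C) (t : R) : C :=
  Complex (derive1 (fun s => complex.Re (g s)) t)
          (derive1 (fun s => complex.Im (g s)) t).

(* vectors in C^T are functions T -> C, operators are kernels T -> T -> C *)
Definition inner (T : finType) (u v : T -> C) : C := \sum_(x : T) (u x)^* * v x.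

Definition unit_vec (T : finType) (u : T -> C) : Prop := inner u u = 1.

Definition unitary (T : finType) (U : T -> T -> C) : Prop :=
  (forall y z : T, \sum_(x : T) (U x y)^* * U x z = (y == z)%:R) /\
  (forall y z : T, \sum_(x : T) U y x * (U z x)^* = (y == z)%:R).

Variables (D k : nat).

(* basis labels of H_0 (x) C^D and of C^D (x) C^k *)
Definition Idx1 := ('I_D * 'I_k)%type.
(* basis labels of H_0 (x) H_1 (x) ... (x) H_n : unit number l+1 is the
   ordinal l : 'I_n *)
Definition Idx (n : nat) := ('I_D * {ffun 'I_n -> 'I_k})%type.

(* W^{(j)} : the operator U on H_0 (x) C^k acting on H_0 (x) H_{j+1}
   (ordinal j), identity elsewhere *)
Definition actU (n : nat) (U : Idx1 -> Idx1 -> C) (j : 'I_n)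
    (v : Idx n -> C) : Idx n -> C :=
  fun x => \sum_(b : 'I_D) \sum_(c : 'I_k)
     U (x.1, x.2 j) (b, c) * v (b, [ffun l => if l == j then c else x.2 l]).

Definition init_state (psi : 'I_D -> C) (chi : 'I_k -> C) (n : nat)
    : Idx n -> C :=
  fun x => psi x.1 * \prod_(l : 'I_n) chi (x.2 l).

Definition PsiTh (Wt : R -> Idx1 -> Idx1 -> C) (psi : 'I_D -> C)
    (chi : 'I_k -> C) (n : nat) (th : R) : Idx n -> C :=
  foldl (fun v j => actU (Wt th) j v) (@init_state psi chi n) (enum 'I_n).

Definition PsiDot (Wt : R -> Idx1 -> Idx1 -> C) (psi : 'I_D -> C)
    (chi : 'I_k -> C) (n : nat) (th0 : R) : Idx n -> C :=
  fun x => cderiv (fun th => PsiTh Wt psi chi (n:=n) th x) th0.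

Definition Mop (Wt : R -> Idx1 -> Idx1 -> C) (psi : 'I_D -> C)
    (chi : 'I_k -> C) (n : nat) (th0 : R) : Idx n -> Idx n -> C :=
  fun x y =>
    PsiTh Wt psi chi (n:=n) th0 x * (PsiDot Wt psi chi (n:=n) th0 y)^*
    - PsiDot Wt psi chi (n:=n) th0 x * (PsiTh Wt psi chi (n:=n) th0 y)^*.

(* M^{(n)}_j(j-1) = Tr_{0,j+1,...,n} <e^[1] (x)...(x) e^[j-1]| M^{(n)}
   |e^[1] (x)...(x) e^[j-1]>, written out entrywise as an operator on
   H_j = C^k.  Unit l+1 corresponds to ordinal l, and e l is the vector
   e^{[l+1]}; unit j is the ordinal with value j.-1. *)
Definition Mj (Wt : R -> Idx1 -> Idx1 -> C) (psi : 'I_D -> C)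
    (chi : 'I_k -> C) (th0 : R) (n j : nat) (e : nat -> 'I_k -> C)
    : 'M[C]_k :=
  \matrix_(c < k, d < k)
    \sum_(a : 'I_D) \sum_(f : {ffun 'I_n -> 'I_k})
      \sum_(g : {ffun 'I_n -> 'I_k} |
             [forall l : 'I_n,
                ((val l == j.-1)%N ==> (f l == c) && (g l == d)) &&
                ((j.-1 < val l)%N ==> (f l == g l))])
        (\prod_(l : 'I_n | (val l < j.-1)%N) ((e (val l) (f l))^* * e (val l) (g l)))
        * Mop Wt psi chi (n:=n) th0 (a, f) (a, g).

End QDefs.

From mathcomp Require Import all_boot all_order all_algebra.
From mathcomp Require Import all_classical all_reals all_analysis.
From mathcomp Require Import complex ring.
Import Order.TTheory GRing.Theory Num.Theory.
Local Open Scope ring_scope.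

(** Since [W (psi (x) chi) = psi (x) chi], at [theta0] the state [Psi(n)] is
    the product state [psi (x) chi^(x)n], and differentiating the recursion
    [Psi_theta(n+1) = W^(n+1)_theta (Psi_theta(n) (x) chi)] gives
    [dPsi(n+1) = chi^(x)n (x) (dW (psi (x) chi)) + W^(n+1) (dPsi(n) (x) chi)].
    Tracing [M^(n+1)] over [H_0 (x) H_(n+1)], the terms in
    [<psi (x) chi | dW | psi (x) chi>] vanish by hypothesis, and the cross terms
    collapse because [W^* (psi (x) chi) = psi (x) chi]; what is left is
    [Tr_0 M^(n)].  Hence for [j <= n] the matrix elements over units
    [1..j-1] and the trace over units [j+1..n+1] of [M^(n+1)] and [M^(n)]
    coincide, and the theorem follows by induction on [n]. *)

Set Implicit Arguments.
Unset Strict Implicit.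

Lemma conjC_sum_mul (F : numClosedFieldType) (I : finType) (a b : I -> F) :
  (\sum_x a x * (b x)^*)^* = \sum_x b x * (a x)^*.
Proof.
by rewrite rmorph_sum; apply: eq_bigr => x _; rewrite rmorphM /= conjCK mulrC.
Qed.

Section ComplexDerivative.
Variable R : realType.
Local Notation C := R[i].
Implicit Types (g h : R -> C) (t : R) (dg dh : C).

Definition is_cderive g t dg : Prop :=
  is_derive t (1 : R) (fun s => complex.Re (g s)) (complex.Re dg) /\
  is_derive t (1 : R) (fun s => complex.Im (g s)) (complex.Im dg).

Lemma cderiv_val g t dg : is_cderive g t dg -> cderiv g t = dg.
Proof.
case=> dRe dIm; rewrite /cderiv !derive1E.
rewrite (@derive_val _ _ _ _ _ _ _ dRe) (@derive_val _ _ _ _ _ _ _ dIm).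
by clear dRe dIm; case: dg.
Qed.

Lemma csmooth_is_cderive g t : csmooth g -> is_cderive g t (cderiv g t).
Proof.
by case=> sRe sIm; split; rewrite /cderiv /= derive1E; apply: derivableP; [exact: sRe 0%N t|exact: sIm 0%N t].
Qed.

Lemma Re_addc (a b : C) : complex.Re (a + b) = complex.Re a + complex.Re b.
Proof. by case: a; case: b. Qed.

Lemma Im_addc (a b : C) : complex.Im (a + b) = complex.Im a + complex.Im b.
Proof. by case: a; case: b. Qed.

Lemma Re_mulc (a b : C) :
  complex.Re (a * b) = complex.Re a * complex.Re b - complex.Im a * complex.Im b.
Proof. by case: a; case: b. Qed.

Lemma Im_mulc (a b : C) :
  complex.Im (a * b) = complex.Re a * complex.Im b + complex.Im a * complex.Re b.
Proof. by case: a; case: b => * /=; ring. Qed.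

Lemma is_cderive_cst (a : C) t : is_cderive (fun=> a) t 0.
Proof. by split; apply: is_derive_eq (is_derive_cst _ _ _) _. Qed.

Lemma is_cderiveD g h t dg dh : is_cderive g t dg -> is_cderive h t dh ->
  is_cderive (fun s => g s + h s) t (dg + dh).
Proof.
case=> gRe gIm [hRe hIm]; split.
- have -> : (fun s => complex.Re (g s + h s)) =
            (fun s => complex.Re (g s)) + (fun s => complex.Re (h s)).
    by apply: boolp.funext => s; rewrite Re_addc.
  by rewrite Re_addc; exact: is_deriveD.
- have -> : (fun s => complex.Im (g s + h s)) =
            (fun s => complex.Im (g s)) + (fun s => complex.Im (h s)).
    by apply: boolp.funext => s; rewrite Im_addc.
  by rewrite Im_addc; exact: is_deriveD.
Qed.

Lemma is_cderiveM g h t dg dh : is_cderive g t dg -> is_cderive h t dh ->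
  is_cderive (fun s => g s * h s) t (dg * h t + g t * dh).
Proof.
case=> gRe gIm [hRe hIm]; split.
- have -> : (fun s => complex.Re (g s * h s)) =
            (fun s => complex.Re (g s)) * (fun s => complex.Re (h s)) -
            (fun s => complex.Im (g s)) * (fun s => complex.Im (h s)).
    by apply: boolp.funext => s; rewrite Re_mulc.
  apply: is_derive_eq (is_deriveB (is_deriveM gRe hRe) (is_deriveM gIm hIm)) _.
  by rewrite Re_addc !Re_mulc /GRing.scale /=; ring.
- have -> : (fun s => complex.Im (g s * h s)) =
            (fun s => complex.Re (g s)) * (fun s => complex.Im (h s)) +
            (fun s => complex.Im (g s)) * (fun s => complex.Re (h s)).
    by apply: boolp.funext => s; rewrite Im_mulc.
  apply: is_derive_eq (is_deriveD (is_deriveM gRe hIm) (is_deriveM gIm hRe)) _.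
  by rewrite Im_addc !Im_mulc /GRing.scale /=; ring.
Qed.

Lemma is_cderive_sum (I : finType) (F : I -> R -> C) (dF : I -> C) t :
  (forall i, is_cderive (F i) t (dF i)) ->
  is_cderive (fun s => \sum_i F i s) t (\sum_i dF i).
Proof.
move=> dFi; rewrite unlock; elim: (index_enum I) => [|i r IH] /=.
  exact: is_cderive_cst.
exact: is_cderiveD.
Qed.

End ComplexDerivative.

Section FfunSnoc.
Variables (T : finType) (n : nat).

Definition ffun_init (f : {ffun 'I_n.+1 -> T}) : {ffun 'I_n -> T} :=
  [ffun l => f (widen_ord (leqnSn n) l)].

Definition ffun_snoc (f : {ffun 'I_n -> T}) (z : T) : {ffun 'I_n.+1 -> T} :=
  [ffun l => if unlift ord_max l is Some l' then f l' else z].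

Lemma widen_lift_max (l : 'I_n) : widen_ord (leqnSn n) l = lift ord_max l.
Proof. by apply: ord_inj; rewrite lift_max. Qed.

Lemma ffun_snoc_lift f z l : ffun_snoc f z (lift ord_max l) = f l.
Proof. by rewrite ffunE liftK. Qed.

Lemma ffun_snoc_widen f z l : ffun_snoc f z (widen_ord (leqnSn n) l) = f l.
Proof. by rewrite widen_lift_max ffun_snoc_lift. Qed.

Lemma ffun_snoc_max f z : ffun_snoc f z ord_max = z.
Proof. by rewrite ffunE unlift_none. Qed.

Lemma ffun_snocK f z : ffun_init (ffun_snoc f z) = f.
Proof. by apply/ffunP => l; rewrite ffunE ffun_snoc_widen. Qed.

Lemma ffun_initK f : ffun_snoc (ffun_init f) (f ord_max) = f.
Proof.
apply/ffunP => l; case: (unliftP ord_max l) => [l'|] ->; last by rewrite ffun_snoc_max.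
by rewrite ffun_snoc_lift ffunE widen_lift_max.
Qed.

Lemma big_ffun_snoc (V : nmodType) (F : {ffun 'I_n.+1 -> T} -> V) :
  \sum_f F f = \sum_(f : {ffun 'I_n -> T}) \sum_z F (ffun_snoc f z).
Proof.
rewrite pair_bigA /= (reindex (fun p => ffun_snoc p.1 p.2)) //=.
exists (fun f => (ffun_init f, f ord_max)) => [[f z] _ | f _] /=.
  by rewrite ffun_snocK ffun_snoc_max.
by rewrite ffun_initK.
Qed.

End FfunSnoc.

Section PsiRecursion.
Variable R : realType.
Local Notation C := R[i].
Variables (D k : nat) (chi : 'I_k -> C) (psi : 'I_D -> C).
Variable Wt : R -> Idx1 D k -> Idx1 D k -> C.

Definition tensor_chi n (u : Idx D k n -> C) : Idx D k n.+1 -> C :=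
  fun x => u (x.1, ffun_init x.2) * chi (x.2 ord_max).

Lemma actU_tensor_chi (U : Idx1 D k -> Idx1 D k -> C) n (j : 'I_n) u :
  actU U (widen_ord (leqnSn n) j) (tensor_chi u) = tensor_chi (actU U j u).
Proof.
apply: boolp.funext => x; rewrite /actU /tensor_chi !mulr_suml.
apply: eq_bigr => b _; rewrite mulr_suml; apply: eq_bigr => c _.
have max_neq_j : (ord_max == widen_ord (leqnSn n) j) = false.
  by apply/negbTE; rewrite -val_eqE /= gtn_eqF.
rewrite ffunE max_neq_j mulrA ffunE; congr (_ * u (b, _) * _).
by apply/ffunP => l; rewrite !ffunE -val_eqE /= val_eqE.
Qed.

Lemma init_state_succ n :
  init_state psi chi (n:=n.+1) = tensor_chi (init_state psi chi (n:=n)).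
Proof.
apply: boolp.funext => x; rewrite /init_state /tensor_chi big_ord_recr /= mulrA.
by congr (_ * _ * _); apply: eq_bigr => l _; rewrite ffunE.
Qed.

Lemma PsiTh_succ n th (x : Idx D k n.+1) :
  PsiTh Wt psi chi (n:=n.+1) th x =
  \sum_b \sum_c Wt th (x.1, x.2 ord_max) (b, c) *
                (PsiTh Wt psi chi (n:=n) th (b, ffun_init x.2) * chi c).
Proof.
have foldl_tensor_chi s u :
    foldl (fun v j => actU (Wt th) j v) (tensor_chi u) (map (widen_ord (leqnSn n)) s) =
    tensor_chi (foldl (fun v j => actU (Wt th) j v) u s).
  by elim: s u => [|j s IH] u //=; rewrite actU_tensor_chi IH.
rewrite /PsiTh enum_ordSr foldl_rcons init_state_succ foldl_tensor_chi /actU.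
apply: eq_bigr => b _; apply: eq_bigr => c _.
rewrite /tensor_chi ffunE eqxx; congr (_ * (PsiTh _ _ _ _ (b, _) * _)).
apply/ffunP => l; rewrite !ffunE.
by have -> : (widen_ord (leqnSn n) l == ord_max) = false
  by apply/negbTE; rewrite -val_eqE /= ltn_eqF.
Qed.

Variable th0 : R.

Lemma PsiTh_fixed (hfix : forall x : Idx1 D k,
     \sum_(y : Idx1 D k) Wt th0 x y * (psi y.1 * chi y.2) = psi x.1 * chi x.2)
  n x : PsiTh Wt psi chi (n:=n) th0 x = init_state psi chi (n:=n) x.
Proof.
elim: n x => [|n IH] x; first by rewrite /PsiTh enum_ord0.
rewrite PsiTh_succ init_state_succ /tensor_chi /init_state /= mulrAC.
rewrite -(hfix (x.1, x.2 ord_max)) mulr_suml pair_bigA /=.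
by apply: eq_bigr => -[b c] _ /=; rewrite IH /init_state /=; ring.
Qed.

Hypothesis hWdiff : forall x y : Idx1 D k,
  is_cderive (fun th => Wt th x y) th0 (cderiv (fun th => Wt th x y) th0).

Definition PsiDot_succ_expr n (x : Idx D k n.+1) : C :=
  \sum_b \sum_c
     (cderiv (fun th => Wt th (x.1, x.2 ord_max) (b, c)) th0 *
        (PsiTh Wt psi chi (n:=n) th0 (b, ffun_init x.2) * chi c) +
      Wt th0 (x.1, x.2 ord_max) (b, c) *
        (PsiDot Wt psi chi (n:=n) th0 (b, ffun_init x.2) * chi c)).

Lemma is_cderive_PsiTh_succ n x :
  (forall y, is_cderive (fun th => PsiTh Wt psi chi (n:=n) th y) th0
                        (PsiDot Wt psi chi (n:=n) th0 y)) ->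
  is_cderive (fun th => PsiTh Wt psi chi (n:=n.+1) th x) th0 (PsiDot_succ_expr x).
Proof.
move=> dPsi.
have -> : (fun th => PsiTh Wt psi chi (n:=n.+1) th x) =
    fun th => \sum_b \sum_c Wt th (x.1, x.2 ord_max) (b, c) *
                (PsiTh Wt psi chi (n:=n) th (b, ffun_init x.2) * chi c).
  by apply: boolp.funext => th; rewrite PsiTh_succ.
apply: is_cderive_sum => b; apply: is_cderive_sum => c.
have := is_cderiveM (hWdiff _ _) (is_cderiveM (dPsi (b, ffun_init x.2)) (is_cderive_cst (chi c) th0)).
by rewrite mulr0 addr0.
Qed.

Lemma is_cderive_PsiTh n x :
  is_cderive (fun th => PsiTh Wt psi chi (n:=n) th x) th0 (PsiDot Wt psi chi (n:=n) th0 x).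
Proof.
rewrite /PsiDot; elim: n x => [|n IH] x.
  have -> : (fun th => PsiTh Wt psi chi (n:=0) th x) = fun=> init_state psi chi x.
    by apply: boolp.funext => th; rewrite /PsiTh enum_ord0.
  by rewrite (cderiv_val (is_cderive_cst _ _)); exact: is_cderive_cst.
by have dPsi := is_cderive_PsiTh_succ x IH; rewrite (cderiv_val dPsi).
Qed.

Lemma PsiDot_succ n x : PsiDot Wt psi chi (n:=n.+1) th0 x = PsiDot_succ_expr x.
Proof. exact/cderiv_val/is_cderive_PsiTh_succ/is_cderive_PsiTh. Qed.

End PsiRecursion.
Section PartialTrace.
Variable R : realType.
Local Notation C := R[i].
Variables (D k : nat) (chi : 'I_k -> C) (psi : 'I_D -> C).
Variable Wt : R -> Idx1 D k -> Idx1 D k -> C.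
Variable th0 : R.
Hypothesis hchi : unit_vec chi.
Hypothesis hWisometry : forall y z : Idx1 D k,
  \sum_x (Wt th0 x y)^* * Wt th0 x z = (y == z)%:R.
Hypothesis hWdiff : forall x y : Idx1 D k,
  is_cderive (fun th => Wt th x y) th0 (cderiv (fun th => Wt th x y) th0).
Hypothesis hfix : forall x : Idx1 D k,
  \sum_(y : Idx1 D k) Wt th0 x y * (psi y.1 * chi y.2) = psi x.1 * chi x.2.
Hypothesis hdot : \sum_(x : Idx1 D k) \sum_(y : Idx1 D k)
  (psi x.1 * chi x.2)^* * cderiv (fun th => Wt th x y) th0 * (psi y.1 * chi y.2) = 0.

Definition phi (y : Idx1 D k) : C := psi y.1 * chi y.2.

Definition dW_phi (x : Idx1 D k) : C :=
  \sum_y cderiv (fun th => Wt th x y) th0 * phi y.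

Definition W0_apply (v : Idx1 D k -> C) (x : Idx1 D k) : C :=
  \sum_y Wt th0 x y * v y.

Definition chi_prod n (f : {ffun 'I_n -> 'I_k}) : C := \prod_l chi (f l).

Definition trace0_Mop n (f g : {ffun 'I_n -> 'I_k}) : C :=
  \sum_a Mop Wt psi chi (n:=n) th0 (a, f) (a, g).

Lemma dW_phi_orthogonal : \sum_x dW_phi x * (phi x)^* = 0.
Proof.
apply: etrans hdot; apply: eq_bigr => x _; rewrite /dW_phi mulr_suml.
by apply: eq_bigr => y _; rewrite /phi; ring.
Qed.

Lemma phi_dW_phi_orthogonal : \sum_x phi x * (dW_phi x)^* = 0.
Proof. by rewrite -conjC_sum_mul dW_phi_orthogonal rmorph0. Qed.

(* [W phi = phi] and [W^* W = 1] give [W^* phi = phi]. *)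
Lemma W0_apply_phi v : \sum_x W0_apply v x * (phi x)^* = \sum_y v y * (phi y)^*.
Proof.
have conj_phi x : (phi x)^* = \sum_y (Wt th0 x y)^* * (phi y)^*.
  by rewrite /phi -(hfix x) rmorph_sum; apply: eq_bigr => y _; rewrite rmorphM.
transitivity (\sum_x \sum_y \sum_y' v y * (phi y')^* * ((Wt th0 x y')^* * Wt th0 x y)).
  apply: eq_bigr => x _; rewrite conj_phi /W0_apply mulr_suml; apply: eq_bigr => y _.
  by rewrite mulr_sumr; apply: eq_bigr => y' _; ring.
rewrite exchange_big; apply: eq_bigr => y _; rewrite exchange_big /=.
under eq_bigr => y' _ do rewrite -mulr_sumr hWisometry.
rewrite (bigD1 y) //= eqxx mulr1 big1 ?addr0 // => y' /negbTE ->.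
by rewrite mulr0.
Qed.

Lemma phi_W0_apply v : \sum_x phi x * (W0_apply v x)^* = \sum_y phi y * (v y)^*.
Proof. by rewrite -conjC_sum_mul W0_apply_phi conjC_sum_mul. Qed.

Lemma phi_tensor_chi (u : 'I_D -> C) :
  \sum_y phi y * (u y.1 * chi y.2)^* = \sum_b psi b * (u b)^*.
Proof.
have chi_norm : \sum_c chi c * (chi c)^* = 1.
  by rewrite -hchi /inner; apply: eq_bigr => c _; rewrite mulrC.
transitivity (\sum_b \sum_c psi b * (u b)^* * (chi c * (chi c)^*)).
  by rewrite pair_bigA; apply: eq_bigr => -[b c] _; rewrite /phi rmorphM /=; ring.
by apply: eq_bigr => b _; rewrite -mulr_sumr chi_norm mulr1.
Qed.

Lemma PsiTh_snoc n f z a :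
  PsiTh Wt psi chi (n:=n.+1) th0 (a, ffun_snoc f z) = chi_prod f * phi (a, z).
Proof.
rewrite PsiTh_fixed // init_state_succ /tensor_chi /= ffun_snocK ffun_snoc_max.
by rewrite /init_state /chi_prod /phi /=; ring.
Qed.

Lemma PsiDot_snoc n g a z :
  PsiDot Wt psi chi (n:=n.+1) th0 (a, ffun_snoc g z) =
  chi_prod g * dW_phi (a, z) +
  W0_apply (fun y => PsiDot Wt psi chi (n:=n) th0 (y.1, g) * chi y.2) (a, z).
Proof.
rewrite PsiDot_succ // /PsiDot_succ_expr /= ffun_snocK ffun_snoc_max pair_bigA.
rewrite /dW_phi /W0_apply mulr_sumr -big_split /=; apply: eq_bigr => -[b c] _ /=.
by rewrite PsiTh_fixed // /init_state /chi_prod /phi /=; ring.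
Qed.

Lemma trace_Mop_snoc n (f g : {ffun 'I_n -> 'I_k}) :
  \sum_(x : Idx1 D k) Mop Wt psi chi (n:=n.+1) th0
                          (x.1, ffun_snoc f x.2) (x.1, ffun_snoc g x.2) =
  trace0_Mop f g.
Proof.
set uf := fun y : Idx1 D k => PsiDot Wt psi chi (n:=n) th0 (y.1, f) * chi y.2.
set ug := fun y : Idx1 D k => PsiDot Wt psi chi (n:=n) th0 (y.1, g) * chi y.2.
transitivity (\sum_x (chi_prod f * (chi_prod g)^* * (phi x * (dW_phi x)^*)
   - chi_prod f * (chi_prod g)^* * (dW_phi x * (phi x)^*)
   + chi_prod f * (phi x * (W0_apply ug x)^*)
   - (chi_prod g)^* * (W0_apply uf x * (phi x)^*))).
  apply: eq_bigr => -[a z] _ /=; rewrite /Mop !PsiTh_snoc !PsiDot_snoc.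
  by rewrite !rmorphD !rmorphM /=; ring.
rewrite !sumrB big_split /= sumrB -!mulr_sumr.
rewrite phi_dW_phi_orthogonal dW_phi_orthogonal phi_W0_apply W0_apply_phi.
rewrite !mulr0 subrr add0r -(conjC_sum_mul phi uf).
rewrite (phi_tensor_chi (fun b => PsiDot Wt psi chi (n:=n) th0 (b, f))).
rewrite (phi_tensor_chi (fun b => PsiDot Wt psi chi (n:=n) th0 (b, g))).
rewrite conjC_sum_mul !mulr_sumr -!sumrB; apply: eq_bigr => a _.
by rewrite /Mop !PsiTh_fixed // /init_state /chi_prod rmorphM /=; ring.
Qed.

Section Stability.
Variables (j : nat) (e : nat -> 'I_k -> C).

Definition Mj_cond n (c d : 'I_k) (f g : {ffun 'I_n -> 'I_k}) : bool :=
  [forall l : 'I_n,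
     ((val l == j.-1)%N ==> (f l == c) && (g l == d)) &&
     ((j.-1 < val l)%N ==> (f l == g l))].

Definition Mj_weight n (f g : {ffun 'I_n -> 'I_k}) : C :=
  \prod_(l : 'I_n | (val l < j.-1)%N) ((e (val l) (f l))^* * e (val l) (g l)).

Lemma MjE n (c d : 'I_k) : Mj Wt psi chi th0 n j e c d =
  \sum_(f : {ffun 'I_n -> 'I_k}) \sum_(g : {ffun 'I_n -> 'I_k})
    (if Mj_cond c d f g then Mj_weight f g * trace0_Mop f g else 0).
Proof.
rewrite mxE exchange_big; apply: eq_bigr => f _.
rewrite exchange_big /= big_mkcond; apply: eq_bigr => g _.
by rewrite /Mj_cond /Mj_weight /trace0_Mop; case: ifP => _; rewrite ?mulr_sumr.
Qed.

Variable n : nat.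
Hypothesis hjn : (j.-1 < n)%N.

Lemma Mj_cond_snoc (c d : 'I_k) (f g : {ffun 'I_n -> 'I_k}) z z' :
  Mj_cond c d (ffun_snoc f z) (ffun_snoc g z') = Mj_cond c d f g && (z == z').
Proof.
apply/forallP/andP => [cond | [/forallP cond eq_zz'] l].
  split; last by have := cond ord_max; rewrite !ffun_snoc_max /= (gtn_eqF hjn) hjn.
  by apply/forallP => l; have := cond (widen_ord (leqnSn n) l); rewrite !ffun_snoc_widen.
case: (unliftP ord_max l) => [l'|] ->; last by rewrite !ffun_snoc_max /= (gtn_eqF hjn) hjn.
by rewrite -widen_lift_max !ffun_snoc_widen; exact: cond.
Qed.

Lemma Mj_weight_snoc (f g : {ffun 'I_n -> 'I_k}) z z' :
  Mj_weight (ffun_snoc f z) (ffun_snoc g z') = Mj_weight f g.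
Proof.
rewrite /Mj_weight [LHS]big_mkcond big_ord_recr /= ltnNge (ltnW hjn) /= mulr1.
by rewrite [RHS]big_mkcond; apply: eq_bigr => l _; rewrite !ffun_snoc_widen.
Qed.

Lemma Mj_succ : Mj Wt psi chi th0 n.+1 j e = Mj Wt psi chi th0 n j e.
Proof.
apply/matrixP => c d; rewrite !MjE big_ffun_snoc; apply: eq_bigr => f _.
under eq_bigr => z _ do rewrite big_ffun_snoc.
rewrite exchange_big; apply: eq_bigr => g _.
under eq_bigr => z _ do under eq_bigr => z' _ do rewrite Mj_cond_snoc Mj_weight_snoc.
transitivity (\sum_z if Mj_cond c d f g
                     then Mj_weight f g * trace0_Mop (ffun_snoc f z) (ffun_snoc g z)
                     else 0).
  apply: eq_bigr => z _; rewrite (bigD1 z) //= eqxx andbT big1 ?addr0 //.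
  by move=> z' /negbTE; rewrite eq_sym => ->; rewrite andbF.
case: ifP => _; last by rewrite big1.
by rewrite -mulr_sumr /trace0_Mop exchange_big pair_bigA /= trace_Mop_snoc.
Qed.

End Stability.

End PartialTrace.

Unset Implicit Arguments.
Set Strict Implicit.

Theorem mainTheorem2 (R : realType) (D k : nat) (hD : (2 <= D)%N) (hk : (2 <= k)%N)
  (chi : 'I_k -> R[i]) (hchi : unit_vec chi)
  (Wt : R -> Idx1 D k -> Idx1 D k -> R[i])
  (hWunit : forall th : R, unitary (Wt th))
  (hWsmooth : forall x y : Idx1 D k, csmooth (fun th => Wt th x y))
  (th0 : R) (psi : 'I_D -> R[i]) (hpsi : unit_vec psi)
  (hfix : forall x : Idx1 D k,
     \sum_(y : Idx1 D k) Wt th0 x y * (psi y.1 * chi y.2) = psi x.1 * chi x.2)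
  (hdot : \sum_(x : Idx1 D k) \sum_(y : Idx1 D k)
            (psi x.1 * chi x.2)^* * cderiv (fun th => Wt th x y) th0
              * (psi y.1 * chi y.2) = 0)
  (n j : nat) (hn : (1 <= n)%N) (hj1 : (1 <= j)%N) (hjn : (j <= n)%N)
  (e : nat -> 'I_k -> R[i])
  (he : forall l : nat, (l < j.-1)%N ->
          unit_vec (e l) /\ `|inner (e l) chi| ^+ 2 = (k%:R)^-1) :
  Mj Wt psi chi th0 n j e = Mj Wt psi chi th0 j j e.
Proof.
clear hD hk hpsi he.
have hWdiff x y := csmooth_is_cderive th0 (hWsmooth x y).
elim: n hn hjn => [//|n IH] _; rewrite leq_eqVlt ltnS => /orP[/eqP jn | hjn].
  by rewrite jn.
have hj : (j.-1 < n)%N by apply: leq_trans hjn; rewrite prednK.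
rewrite (Mj_succ hchi (hWunit th0).1 hWdiff hfix hdot e hj).
exact: IH (leq_trans hj1 hjn) hjn.
Qed.
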